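(* Let an FTTC mechanism satisfy bounded advantage. Then for every FEE problem, the output assignment $p$ satisfies bounded envy: for all $i,j\in I$, $$\max_{o\in O}\Big[\sum_{o'\succsim_i o}p_{j,o'}-\sum_{o'\succsim_i o}p_{i,o'}\Big]\le\sum_{o\in O:\,\omega_{j,o}>\omega_{i,o}}(\omega_{j,o}-\omega_{i,o}).$$
   Context: Fractional endowment exchange (FEE) problem: a tuple $(I,O,\succsim_I,\omega)$ where $I$ is a finite set of agents, $O$ a finite set of objects, each agent $i$ has a complete and transitive (possibly non-strict) preference relation $\succsim_i$ over $O$ with asymmetric part $\succ_i$ and symmetric part $\sim_i$, and $\omega=(\omega_{i,o})_{i\in I,o\in O}$ is an endowment matrix with $\omega_{i,o}\in[0,1]$, $\sum_{o\in O}\omega_{i,o}\le 1$ for each $i$, and $q_o=\sum_{i\in I}\omega_{i,o}$ an integer for each $o$. An assignment is a nonnegative matrix $p=(p_{i,o})$ with $\sum_i p_{i,o}\le q_o$ for all $o$ and $\sum_o p_{i,o}\le 1$ for all $i$; $p_i=(p_{i,o})_{o\in O}$ is $i$'s lottery. FTTC (Fractional Top Trading Cycle) on the full preference domain. Initialize $\omega(0)=\omega$, $p(0)=0$, $O(0)=O$. At step $d\ge1$ (with $O(d-1)\ne\emptyset$): (i) Labeling. Put $T_0=O(d-1)$. For $k=1,2,\dots$: let $L_k$ be the set of agents $i\notin L_1\cup\dots\cup L_{k-1}$ for which there exist $o\in T_{k-1}$ and $o'\in O\setminus(T_0\cup\dots\cup T_{k-1})$ with $p_{i,o'}(d-1)>0$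 and $o\sim_i o'$; for $i\in L_k$ let $\tilde O_i(d-1)$ be the set of all such $o'$ for this $i$, and let $T_k=\bigcup_{i\in L_k}\tilde O_i(d-1)$. Stop at the first $k$ with $L_k=\emptyset$. Set $L(d-1)=\bigcup_k L_k$, $\tilde O(d-1)=\bigcup_{k\ge1}T_k$, $\overline{O}(d-1)=O(d-1)\cup\tilde O(d-1)$, and $\tilde O_i(d-1)=\emptyset$ for $i\notin L(d-1)$. (ii) Pointing. The active agents are $I(d-1)=L(d-1)\cup\{i\in I:\sum_o\omega_{i,o}(d-1)>0\}$. For $i\in I(d-1)$ let $B_i$ be the set of $\succsim_i$-maximal elements of $\overline{O}(d-1)$, let $k_i$ be the least $k\ge0$ with $B_i\cap T_k\ne\emptyset$, and let $A_i(d)=B_i\cap T_{k_i}$. (iii) Trading. The mechanism chooses (possibly depending on the history): a ratio matrix $\lambda(d)=(\lambda_{i,o}(d))_{i\in I(d-1),o\in\overline{O}(d-1)}$, nonnegative, with $\sum_{i\in I(d-1)}\lambda_{i,o}(d)=1$ for each $o\in\overline O(d-1)$, $\lambda_{i,o}(d)>0$ only if $\omega_{i,o}(d-1)>0$ (for $o\in O(d-1)$) and only if $o\in\tilde O_i(d-1)$ (for $o\in\tilde O(d-1)$); a quota matrix $\beta(d)$ on $I(d-1)\times O(d-1)$ with $0\le\beta_{i,o}(d)\le\omega_{i,o}(d-1)$; a division matrix $\gamma(d)$ on $I(d-1)\times\overline O(d-1)$, nonnegative, with $\sum_o\gamma_{i,o}(d)=1$ and $\gamma_{i,o}(d)>0$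 only if $o\in A_i(d)$. Let $x^*(d)=(x^*_a(d))_{a\in I(d-1)\cup\overline O(d-1)}$ be the maximum (componentwise largest) nonnegative solution of $x_o=\sum_{i\in I(d-1)}\gamma_{i,o}(d)x_i$ for all $o\in\overline O(d-1)$ and $x_i=\sum_{o\in\overline O(d-1)}\lambda_{i,o}(d)x_o$ for all $i\in I(d-1)$, subject to $\lambda_{i,o}(d)x_o\le\beta_{i,o}(d)$ for $o\in O(d-1)$ and $\lambda_{i,o}(d)x_o\le p_{i,o}(d-1)$ for $o\in\tilde O(d-1)$. For $i\in I(d-1)$: $\omega_{i,o}(d)=\omega_{i,o}(d-1)-\lambda_{i,o}(d)x^*_o(d)$ if $o\in O(d-1)$ and $0$ otherwise; $p_{i,o}(d)=p_{i,o}(d-1)-\mathbf 1[o\in\tilde O_i(d-1)]\lambda_{i,o}(d)x^*_o(d)+\gamma_{i,o}(d)x^*_i(d)$ (with $\gamma_{i,o}(d)=0$ for $o\notin\overline O(d-1)$). For $i\notin I(d-1)$, $\omega_i(d)=\omega_i(d-1)$, $p_i(d)=p_i(d-1)$. Let $O(d)=\{o\in O(d-1):\sum_i\omega_{i,o}(d)>0\}$. If $O(d)=\emptyset$ stop and output $p(d)$; otherwise go to step $d+1$. (Standing assumption: the maximum solution exists at each step and the procedure ends after finitely many steps.) An FTTC mechanism is specified by a rule choosing $\lambda(d),\beta(d),\gamma(d)$ at every step. Bounded advantage: at every step $d$, for all $i,j\in I(d-1)$ and all $o\in O(d-1)$, if $\omega_{i,o}(d-1)\ge\omega_{j,o}(d-1)$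 then $\lambda_{i,o}(d)\ge\lambda_{j,o}(d)$ and $\omega_{i,o}(d)\ge\omega_{j,o}(d)$. *)

From mathcomp Require Import all_boot all_order all_algebra.
Set Implicit Arguments. Unset Strict Implicit. Unset Printing Implicit Defensive.
Import Order.TTheory GRing.Theory Num.Theory.
Local Open Scope ring_scope.

(* pref i o o'  means  o ≿_i o'  (weak preference of agent i). *)
Definition indiff (I O : finType) (pref : I -> rel O) (i : I) (o o' : O) : bool :=
  pref i o o' && pref i o' o.

Definition fee_problem (R : numDomainType) (I O : finType)
  (pref : I -> rel O) (om0 : I -> O -> R) : Prop :=
  [/\ forall i, total (pref i) /\ transitive (pref i),
      forall i o, 0 <= om0 i o <= 1,
      forall i, \sum_(o : O) om0 i o <= 1
    & forall o, exists n : nat, \sum_(i : I) om0 i o = n%:R].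

(* L_k from T_{k-1}, Tall = T_0 ∪ ... ∪ T_{k-1}, Lall = L_1 ∪ ... ∪ L_{k-1} *)
Definition newL (R : numDomainType) (I O : finType) (pref : I -> rel O)
  (p : I -> O -> R) (Tk Tall : {set O}) (Lall : {set I}) : {set I} :=
  [set i | (i \notin Lall) &&
     [exists o in Tk, exists o' : O,
        [&& o' \notin Tall, 0 < p i o' & indiff pref i o o']]].

Definition tOset (R : numDomainType) (I O : finType) (pref : I -> rel O)
  (p : I -> O -> R) (Tk Tall : {set O}) (i : I) : {set O} :=
  [set o' | [&& o' \notin Tall, 0 < p i o' & [exists o in Tk, indiff pref i o o']]].

(* lab k = (T_k, L_k, T_0 ∪ ... ∪ T_k, L_1 ∪ ... ∪ L_k), with T_0 = Ocur, L_0 = ∅ *)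
Fixpoint lab (R : numDomainType) (I O : finType) (pref : I -> rel O)
  (p : I -> O -> R) (Ocur : {set O}) (k : nat)
  : {set O} * {set I} * {set O} * {set I} :=
  match k with
  | 0 => (Ocur, set0, Ocur, set0)
  | k'.+1 =>
      let: (Tk, _, Tall, Lall) := lab pref p Ocur k' in
      let L := newL pref p Tk Tall Lall in
      let Tn := \bigcup_(i in L) tOset pref p Tk Tall i in
      (Tn, L, Tall :|: Tn, Lall :|: L)
  end.

Definition Tlab (R : numDomainType) (I O : finType) (pref : I -> rel O) (p : I -> O -> R) (Ocur : {set O}) (k : nat) : {set O} :=
  (@lab R I O pref p Ocur k).1.1.1.
Definition Llab (R : numDomainType) (I O : finType) (pref : I -> rel O) (p : I -> O -> R) (Ocur : {set O}) (k : nat) : {set I} :=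
  (@lab R I O pref p Ocur k).1.1.2.
Definition Tcum (R : numDomainType) (I O : finType) (pref : I -> rel O) (p : I -> O -> R) (Ocur : {set O}) (k : nat) : {set O} :=
  (@lab R I O pref p Ocur k).1.2.
Definition Lcum (R : numDomainType) (I O : finType) (pref : I -> rel O) (p : I -> O -> R) (Ocur : {set O}) (k : nat) : {set I} :=
  (@lab R I O pref p Ocur k).2.

(* The L_k are pairwise disjoint, so the labeling stops after at most #|I|+1
   rounds; the cumulative sets at round #|I|+1 are the final ones. *)
Definition Lset (R : numDomainType) (I O : finType) pref p Ocur : {set I} :=
  @Lcum R I O pref p Ocur #|I|.+1.
Definition Obar (R : numDomainType) (I O : finType) pref p Ocur : {set O} :=
  @Tcum R I O pref p Ocur #|I|.+1.
Definition Otilde (R : numDomainType) (I O : finType) pref p Ocur : {set O} :=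
  @Obar R I O pref p Ocur :\: Ocur.
Definition Otilde_i (R : numDomainType) (I O : finType) pref p Ocur (i : I) : {set O} :=
  \bigcup_(k < #|I|.+1)
     (if i \in @Llab R I O pref p Ocur k.+1
      then tOset pref p (@Tlab R I O pref p Ocur k) (@Tcum R I O pref p Ocur k) i
      else set0).

Definition Iact (R : numDomainType) (I O : finType) pref (om p : I -> O -> R) Ocur : {set I} :=
  @Lset R I O pref p Ocur :|: [set i | 0 < \sum_(o : O) om i o].

Definition Bmax (R : numDomainType) (I O : finType) pref p Ocur (i : I) : {set O} :=
  [set o in @Obar R I O pref p Ocur |
     [forall o' : O, (o' \in @Obar R I O pref p Ocur) ==> pref i o o']].

(* A_i(d) = B_i ∩ T_{k_i}, k_i least with B_i ∩ T_k ≠ ∅ (T_k = ∅ for k > #|I|+1) *)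
Definition Aset (R : numDomainType) (I O : finType) pref p Ocur (i : I) : {set O} :=
  [set o in @Bmax R I O pref p Ocur i |
     [exists k : 'I_(#|I|.+2),
        (o \in @Tlab R I O pref p Ocur k) &&
        [forall k' : 'I_(#|I|.+2), (k' < k)%N ==>
           [disjoint @Bmax R I O pref p Ocur i & @Tlab R I O pref p Ocur k']]]].

Definition feasible (R : numDomainType) (I O : finType) pref (om p : I -> O -> R) (Ocur : {set O})
  (lam beta gam : I -> O -> R) (xI : I -> R) (xO : O -> R) : Prop :=
  let Ia := @Iact R I O pref om p Ocur in
  let Ob := @Obar R I O pref p Ocur in
  let Ot := @Otilde R I O pref p Ocur in
  (forall i, i \in Ia -> 0 <= xI i) /\
  (forall o, o \in Ob -> 0 <= xO o) /\
  (forall o, o \in Ob -> xO o = \sum_(i in Ia) gam i o * xI i) /\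
  (forall i, i \in Ia -> xI i = \sum_(o in Ob) lam i o * xO o) /\
  (forall i o, i \in Ia -> o \in Ocur -> lam i o * xO o <= beta i o) /\
  (forall i o, i \in Ia -> o \in Ot -> lam i o * xO o <= p i o).

(* One step d of FTTC: from (om, p, Ocur) = (ω(d-1), p(d-1), O(d-1)) with the
   chosen (λ(d), β(d), γ(d)) and the maximum solution x*(d), producing
   (om', p', Onext) = (ω(d), p(d), O(d)). *)
Definition fttc_step (R : numDomainType) (I O : finType) pref (om p : I -> O -> R) (Ocur : {set O})
  (lam beta gam : I -> O -> R) (xI : I -> R) (xO : O -> R)
  (om' p' : I -> O -> R) (Onext : {set O}) : Prop :=
  let Ia := @Iact R I O pref om p Ocur in
  let Ob := @Obar R I O pref p Ocur in
  let Ot := @Otilde R I O pref p Ocur in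
      (forall i o, i \in Ia -> o \in Ob -> 0 <= lam i o) /\
      (forall o, o \in Ob -> \sum_(i in Ia) lam i o = 1) /\
      (forall i o, i \in Ia -> o \in Ocur -> 0 < lam i o -> 0 < om i o) /\
      (forall i o, i \in Ia -> o \in Ot -> 0 < lam i o ->
                   o \in @Otilde_i R I O pref p Ocur i) /\
      (forall i o, i \in Ia -> o \in Ocur -> 0 <= beta i o <= om i o) /\
      (forall i o, i \in Ia -> o \in Ob -> 0 <= gam i o) /\
      (forall i, i \in Ia -> \sum_(o in Ob) gam i o = 1) /\
      (forall i o, i \in Ia -> o \in Ob -> 0 < gam i o ->
                   o \in @Aset R I O pref p Ocur i) /\
      (feasible pref om p Ocur lam beta gam xI xO /\
       forall yI yO, feasible pref om p Ocur lam beta gam yI yO ->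
         (forall i, i \in Ia -> yI i <= xI i) /\
         (forall o, o \in Ob -> yO o <= xO o)) /\
      (forall i o, om' i o =
         if i \in Ia then (if o \in Ocur then om i o - lam i o * xO o else 0)
         else om i o) /\
      (forall i o, p' i o =
         if i \in Ia then
           p i o
           - (if o \in @Otilde_i R I O pref p Ocur i then lam i o * xO o else 0)
           + (if o \in Ob then gam i o * xI i else 0)
         else p i o) /\
      Onext = [set o in Ocur | 0 < \sum_(i : I) om' i o].

(* A complete (terminating) run of an FTTC mechanism on the problem
   (pref, om0), ending at step D; the mechanism's choices at step d are
   lam d, beta d, gam d (they may depend arbitrarily on the history). *)
Definition fttc_run (R : numDomainType) (I O : finType) pref (om0 : I -> O -> R) (D : nat)
  (om p : nat -> I -> O -> R) (Os : nat -> {set O})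
  (lam beta gam : nat -> I -> O -> R) (xI : nat -> I -> R) (xO : nat -> O -> R)
  : Prop :=
  [/\ forall i o, om 0%N i o = om0 i o,
      forall i o, p 0%N i o = 0,
      Os 0%N = setT,
      Os D = set0
    & forall d, (0 < d <= D)%N ->
        Os d.-1 != set0 /\
        fttc_step pref (om d.-1) (p d.-1) (Os d.-1) (lam d) (beta d) (gam d)
                  (xI d) (xO d) (om d) (p d) (Os d)].

Definition bounded_advantage (R : numDomainType) (I O : finType) pref (D : nat)
  (om p : nat -> I -> O -> R) (Os : nat -> {set O}) (lam : nat -> I -> O -> R)
  : Prop :=
  forall d, (0 < d <= D)%N ->
  forall i j o,
    i \in @Iact R I O pref (om d.-1) (p d.-1) (Os d.-1) ->
    j \in @Iact R I O pref (om d.-1) (p d.-1) (Os d.-1) ->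
    o \in Os d.-1 ->
    om d.-1 j o <= om d.-1 i o ->
    lam d j o <= lam d i o /\ om d j o <= om d i o.

(* Bounded envy of an assignment q with respect to the endowment om0
   (the max over o is expressed as: the bound holds for every o). *)
Definition bounded_envy (R : numDomainType) (I O : finType) (pref : I -> rel O)
  (om0 q : I -> O -> R) : Prop :=
  forall i j (o : O),
    \sum_(o' | pref i o' o) q j o' - \sum_(o' | pref i o' o) q i o'
      <= \sum_(o1 | om0 i o1 < om0 j o1) (om0 j o1 - om0 i o1).

(* Fix agents i, j and an object o0, and write U for the set of objects that
   i weakly prefers to o0.  Along the run we track the potential
     Psi(d) = (total assignment of j) - (assignment of i in U)
              + sum_o max(0, om_j(o) - om_i(o)),
   which dominates the envy  (assignment of j in U) - (assignment of i in U)
   and equals the envy bound at d = 0.  In a step where Obar still contains an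
   object of U, everything i receives lies in U (objects in A_i are maximal in
   Obar), so i's mass in U grows by at least what i spends; j's total mass
   grows by exactly what j spends; and bounded advantage makes the excess
   endowment of j over i drop by at least (spent by j) - (spent by i).  Hence
   Psi does not increase.  Once Obar contains no object of U, it never does
   again (Obar shrinks), and the step no longer touches objects of U, so the
   envy is frozen. *)

From mathcomp Require Import all_boot all_order all_algebra.
From mathcomp Require Import zify ring lra.
Set Implicit Arguments. Unset Strict Implicit. Unset Printing Implicit Defensive.
Import Order.TTheory GRing.Theory Num.Theory.
Local Open Scope ring_scope.

Lemma indiffC (I O : finType) (pref : I -> rel O) a x y :
  indiff pref a x y = indiff pref a y x.
Proof. by rewrite /indiff andbC. Qed.

Section Labeling.
Variables (R : numDomainType) (I O : finType) (pref : I -> rel O).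
Variables (p : I -> O -> R) (Oc : {set O}).
Local Notation Tl := (Tlab pref p Oc).
Local Notation Tc := (Tcum pref p Oc).
Local Notation Ll := (Llab pref p Oc).
Local Notation Lc := (Lcum pref p Oc).
Local Notation Ob := (Obar pref p Oc).

Lemma lab_succ k :
  [/\ Ll k.+1 = newL pref p (Tl k) (Tc k) (Lc k),
      Tl k.+1 = \bigcup_(i in Ll k.+1) tOset pref p (Tl k) (Tc k) i,
      Tc k.+1 = Tc k :|: Tl k.+1
    & Lc k.+1 = Lc k :|: Ll k.+1].
Proof.
rewrite /Llab /Tlab /Tcum /Lcum /=.
by case: (lab pref p Oc k) => [[[T L] Tall] Lall].
Qed.

Lemma Tcum_mono m n : (m <= n)%N -> Tc m \subset Tc n.
Proof.
move=> /subnK <-; elim: (n - m)%N => [|k IH] //=.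
rewrite addSn; case: (lab_succ (k + m)) => _ _ -> _.
exact: subset_trans IH (subsetUl _ _).
Qed.

Lemma Lcum_mono m n : (m <= n)%N -> Lc m \subset Lc n.
Proof.
move=> /subnK <-; elim: (n - m)%N => [|k IH] //=.
rewrite addSn; case: (lab_succ (k + m)) => _ _ _ ->.
exact: subset_trans IH (subsetUl _ _).
Qed.

Lemma Tlab_sub_Tcum k : Tl k \subset Tc k.
Proof. by case: k => [|k] //; case: (lab_succ k) => _ _ -> _; apply: subsetUr. Qed.

Lemma mem_Tcum k z : z \in Tc k -> exists2 r, (r <= k)%N & z \in Tl r.
Proof.
elim: k => [|k IH]; first by exists 0%N.
case: (lab_succ k) => _ _ -> _; rewrite inE => /orP[/IH [r le_rk zr]|zk].
  by exists r => //; apply: leqW.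
by exists k.+1.
Qed.

Lemma mem_Lcum k a : a \in Lc k -> exists2 s, (s < k)%N & a \in Ll s.+1.
Proof.
elim: k => [|k IH]; first by rewrite /Lcum /= inE.
case: (lab_succ k) => _ _ _ ->; rewrite inE => /orP[/IH [s lt_sk as_]|ak].
  by exists s => //; apply: ltnW.
by exists k.
Qed.

(* Each nonempty round labels at least one new agent. *)
Lemma card_Lcum_ge k : Tl k != set0 -> (k <= #|Lc k|)%N.
Proof.
elim: k => [|k IH] //.
case: (lab_succ k) => defL defT _ defLc.
rewrite defT => /set0Pn [z /bigcupP [a aL zT]].
have Tk_neq0 : Tl k != set0.
  move: zT; rewrite /tOset inE => /and3P [_ _ /existsP [o /andP [oT _]]].
  by apply/set0Pn; exists o.
have disjL : [disjoint Lc k & Ll k.+1].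
  rewrite -setI_eq0; apply/eqP/setP => b; rewrite !inE defL /newL inE.
  by case: (b \in Lc k).
rewrite defLc cardsU (disjoint_setI0 disjL) cards0 subn0.
have : (0 < #|Ll k.+1|)%N by apply/card_gt0P; exists a.
move: (IH Tk_neq0); lia.
Qed.

Lemma Tlab_last : Tl #|I|.+1 = set0.
Proof. by apply/eqP/negPn/negP => /card_Lcum_ge; rewrite ltnNge max_card. Qed.

Lemma Ocur_sub_Obar : Oc \subset Ob.
Proof. exact: (@Tcum_mono 0). Qed.

Lemma Tlab_sub_Obar k : (k <= #|I|.+1)%N -> Tl k \subset Ob.
Proof. by move=> le_k; apply: subset_trans (Tlab_sub_Tcum k) (Tcum_mono le_k). Qed.

Lemma Otilde_i_sub a : Otilde_i pref p Oc a \subset Otilde pref p Oc.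
Proof.
apply/subsetP => o /bigcupP [k _]; case: ifP => aL; last by rewrite inE.
move=> oT; rewrite /Otilde inE; apply/andP; split.
  move: oT; rewrite /tOset inE => /and3P [o_new _ _].
  by apply: contra o_new; apply: (subsetP (@Tcum_mono 0 k _)).
apply: (subsetP (Tlab_sub_Obar (ltn_ord k))).
by case: (lab_succ k) => _ -> _ _; apply/bigcupP; exists a.
Qed.

Lemma Aset_top a o z : o \in Aset pref p Oc a -> z \in Ob -> pref a o z.
Proof.
rewrite /Aset /Bmax !inE => /andP [/andP [_ /forallP top] _] zOb.
by move: (top z); rewrite zOb.
Qed.

(* Suppose every object [a] holds is weakly preferred to all of [Obar].  Then an
   object held by [a] outside [Obar] is not indifferent to anything in
   [Obar]: otherwise labeling would have pulled it into [Obar]. *)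
Lemma held_not_indiff a o' z :
  transitive (pref a) ->
  (forall o1 z1, 0 < p a o1 -> z1 \in Ob -> pref a o1 z1) ->
  0 < p a o' -> o' \notin Ob -> z \in Ob -> ~~ indiff pref a o' z.
Proof.
move=> trans top po' o'_out zOb; apply/negP => ind_o'z.
case: (boolP (a \in Lc #|I|.+1)) => aL.
- case: (mem_Lcum aL) => s lt_s aLs; case: (lab_succ s) => defL defT _ _.
  have := aLs; rewrite defL /newL inE => /andP [_ /existsP [o /andP [oT]]].
  case/existsP=> o'' /and3P [o''_new po'' ind_oo''].
  have oOb : o \in Ob by apply: (subsetP (Tlab_sub_Obar (ltnW lt_s))).
  have o''Ob : o'' \in Ob.
    apply: (subsetP (Tlab_sub_Obar lt_s)); rewrite defT; apply/bigcupP; exists a => //.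
    by rewrite /tOset inE po'' o''_new /=; apply/existsP; exists o; rewrite oT.
  have ind_oo' : indiff pref a o o'.
    move: ind_o'z ind_oo''; rewrite /indiff => /andP [o'z zo'] /andP [oo'' o''o].
    rewrite (top _ _ po' oOb) andbT.
    by apply: (trans o'') oo'' _; apply: (trans z) (top _ _ po'' zOb) zo'.
  move/negP: (o'_out); apply; apply: (subsetP (Tlab_sub_Obar lt_s)).
  rewrite defT; apply/bigcupP; exists a => //; rewrite /tOset inE po' /=.
  apply/andP; split; last by apply/existsP; exists o; rewrite oT ind_oo'.
  by apply: contra o'_out; apply: (subsetP (Tcum_mono (ltnW lt_s))).
- case: (mem_Tcum zOb) => r; rewrite leq_eqVlt => /orP [/eqP -> | lt_r] zT.
    by rewrite Tlab_last inE in zT.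
  move/negP: (aL); apply; apply: (subsetP (Lcum_mono lt_r)).
  case: (lab_succ r) => defL _ _ ->; rewrite inE defL /newL inE; apply/orP; right.
  apply/andP; split; first by apply: contra aL; apply: (subsetP (Lcum_mono (ltnW lt_r))).
  apply/existsP; exists z; rewrite zT /=; apply/existsP; exists o'.
  rewrite po' indiffC ind_o'z andbT /=.
  by rewrite andbT; apply: contra o'_out; apply: (subsetP (Tcum_mono (ltnW lt_r))).
Qed.

End Labeling.

Lemma Obar_shrink (R : numDomainType) (I O : finType) (pref : I -> rel O)
    (p p' : I -> O -> R) (Oc Oc' : {set O}) :
  Oc' \subset Oc ->
  (forall a o', 0 < p' a o' -> o' \notin Obar pref p Oc -> 0 < p a o') ->
  (forall a o' z, 0 < p a o' -> o' \notin Obar pref p Oc -> z \in Obar pref p Oc ->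
       ~~ indiff pref a o' z) ->
  Obar pref p' Oc' \subset Obar pref p Oc.
Proof.
move=> sub_Oc held not_ind.
have Tl_sub k : Tlab pref p' Oc' k \subset Obar pref p Oc.
  elim: k => [|k IH]; first exact: subset_trans sub_Oc (Ocur_sub_Obar _ _ _).
  case: (lab_succ pref p' Oc' k) => _ -> _ _.
  apply/subsetP => o' /bigcupP [a _].
  rewrite /tOset inE => /and3P [_ po' /existsP [o /andP [oT ind_oo']]].
  apply/negPn/negP => o'_out.
  have := not_ind a o' o (held _ _ po' o'_out) o'_out (subsetP IH _ oT).
  by rewrite indiffC ind_oo'.
by apply/subsetP => z /mem_Tcum [r _ zT]; apply: (subsetP (Tl_sub r)).
Qed.

Definition fttc_invariant (R : numDomainType) (I O : finType) (pref : I -> rel O)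
    (om p : I -> O -> R) (Oc : {set O}) : Prop :=
  [/\ forall k o, 0 <= om k o,
      forall k o, 0 <= p k o,
      forall k o, o \notin Oc -> om k o = 0
    & forall a o z, 0 < p a o -> z \in Obar pref p Oc -> pref a o z].

Section Step.
Variables (R : realFieldType) (I O : finType) (pref : I -> rel O).
Variables (om p : I -> O -> R) (Oc : {set O}) (lam beta gam : I -> O -> R)
  (xI : I -> R) (xO : O -> R) (om' p' : I -> O -> R) (Oc' : {set O}).
Hypothesis step : fttc_step pref om p Oc lam beta gam xI xO om' p' Oc'.
Hypothesis pref_trans : forall a, transitive (pref a).
Hypothesis inv : fttc_invariant pref om p Oc.

Local Notation Ia := (Iact pref om p Oc).
Local Notation Ob := (Obar pref p Oc).
Local Notation Ot := (Otilde pref p Oc).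
Local Notation Oti := (Otilde_i pref p Oc).

Lemma om_ge0 k o : 0 <= om k o. Proof. by case: inv. Qed.
Lemma p_ge0 k o : 0 <= p k o. Proof. by case: inv. Qed.
Lemma om_out k o : o \notin Oc -> om k o = 0. Proof. by case: inv => _ _ H _; apply: H. Qed.
Lemma held_top a o z : 0 < p a o -> z \in Ob -> pref a o z.
Proof. by case: inv => _ _ _; apply. Qed.

Lemma lam_ge0 k o : k \in Ia -> o \in Ob -> 0 <= lam k o.
Proof. by case: step => [H _]; apply: H. Qed.
Lemma lam_Oti k o : k \in Ia -> o \in Ot -> 0 < lam k o -> o \in Oti k.
Proof. by case: step => _ [_ [_ [H _]]]; apply: H. Qed.
Lemma beta_le k o : k \in Ia -> o \in Oc -> 0 <= beta k o <= om k o.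
Proof. by case: step => _ [_ [_ [_ [H _]]]]; apply: H. Qed.
Lemma gam_ge0 k o : k \in Ia -> o \in Ob -> 0 <= gam k o.
Proof. by case: step => _ [_ [_ [_ [_ [H _]]]]]; apply: H. Qed.
Lemma gam_sum k : k \in Ia -> \sum_(o in Ob) gam k o = 1.
Proof. by case: step => _ [_ [_ [_ [_ [_ [H _]]]]]]; apply: H. Qed.
Lemma gam_A k o : k \in Ia -> o \in Ob -> 0 < gam k o -> o \in Aset pref p Oc k.
Proof. by case: step => _ [_ [_ [_ [_ [_ [_ [H _]]]]]]]; apply: H. Qed.
Lemma x_feasible : feasible pref om p Oc lam beta gam xI xO.
Proof. by case: step => _ [_ [_ [_ [_ [_ [_ [_ [[H _] _]]]]]]]]. Qed.
Lemma xI_ge0 k : k \in Ia -> 0 <= xI k.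
Proof. by case: x_feasible => [H _]; apply: H. Qed.
Lemma xO_ge0 o : o \in Ob -> 0 <= xO o.
Proof. by case: x_feasible => _ [H _]; apply: H. Qed.
Lemma xI_eq k : k \in Ia -> xI k = \sum_(o in Ob) lam k o * xO o.
Proof. by case: x_feasible => _ [_ [_ [H _]]]; apply: H. Qed.
Lemma lamx_le_beta k o : k \in Ia -> o \in Oc -> lam k o * xO o <= beta k o.
Proof. by case: x_feasible => _ [_ [_ [_ [H _]]]]; apply: H. Qed.
Lemma lamx_le_p k o : k \in Ia -> o \in Ot -> lam k o * xO o <= p k o.
Proof. by case: x_feasible => _ [_ [_ [_ [_ H]]]]; apply: H. Qed.
Lemma om'E k o : om' k o =
  if k \in Ia then (if o \in Oc then om k o - lam k o * xO o else 0) else om k o.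
Proof. by case: step => _ [_ [_ [_ [_ [_ [_ [_ [_ [H _]]]]]]]]]; apply: H. Qed.
Lemma p'E k o : p' k o =
  if k \in Ia then
    p k o - (if o \in Oti k then lam k o * xO o else 0)
    + (if o \in Ob then gam k o * xI k else 0)
  else p k o.
Proof. by case: step => _ [_ [_ [_ [_ [_ [_ [_ [_ [_ [H _]]]]]]]]]]; apply: H. Qed.
Lemma Oc'E : Oc' = [set o in Oc | 0 < \sum_(k : I) om' k o].
Proof. by case: step => _ [_ [_ [_ [_ [_ [_ [_ [_ [_ [_ H]]]]]]]]]]. Qed.

Lemma Otilde_i_Obar k o : o \in Oti k -> o \in Ob.
Proof. by move/(subsetP (Otilde_i_sub _ _ _ _)); rewrite inE => /andP[]. Qed.

Lemma lamx_ge0 k o : k \in Ia -> o \in Ob -> 0 <= lam k o * xO o.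
Proof. by move=> kI oOb; apply: mulr_ge0; [apply: lam_ge0|apply: xO_ge0]. Qed.

Lemma inactive_om0 k o : k \notin Ia -> om k o = 0.
Proof.
rewrite /Iact !inE negb_or => /andP [_]; rewrite -leNgt => sum_le0.
apply/eqP; rewrite eq_le om_ge0 andbT; apply: le_trans sum_le0.
by rewrite (bigD1 o) //= lerDl; apply: sumr_ge0 => *; apply: om_ge0.
Qed.

Lemma om'_ge0 k o : 0 <= om' k o.
Proof.
rewrite om'E; case: ifP => kI; last exact: om_ge0.
case: ifP => oO //; have := lamx_le_beta kI oO; have := beta_le kI oO; lra.
Qed.

Lemma p'_ge0 k o : 0 <= p' k o.
Proof.
rewrite p'E; case: ifP => kI; last exact: p_ge0.
apply: addr_ge0.
  case: ifP => oOti; last by rewrite subr0 p_ge0.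
  by rewrite subr_ge0; apply: (lamx_le_p kI); apply: (subsetP (Otilde_i_sub pref p Oc k)).
by case: ifP => oOb //; apply: mulr_ge0; [apply: gam_ge0|apply: xI_ge0].
Qed.

Lemma om'_out k o : o \notin Oc' -> om' k o = 0.
Proof.
rewrite Oc'E inE negb_and => /orP [oO|]; first by rewrite om'E (negbTE oO) (om_out k oO); case: ifP.
rewrite -leNgt => sum_le0.
have /psumr_eq0P : \sum_(k : I) om' k o = 0.
  by apply/eqP; rewrite eq_le sum_le0 sumr_ge0 // => *; apply: om'_ge0.
by apply => // *; apply: om'_ge0.
Qed.

Lemma p'_out a o : o \notin Ob -> p' a o = p a o.
Proof.
move=> oOb; rewrite p'E (negbTE oOb); case: ifP => // _.
by case: ifP => [/Otilde_i_Obar|]; [rewrite (negbTE oOb)|rewrite subr0 addr0].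
Qed.

Lemma Obar_step_sub : Obar pref p' Oc' \subset Ob.
Proof.
apply: Obar_shrink.
- by rewrite Oc'E; apply/subsetP => o; rewrite inE => /andP[].
- by move=> a o' p'o' o'Ob; rewrite -(p'_out a o'Ob).
- move=> a o' z; apply: held_not_indiff => //; exact: held_top.
Qed.

(* A new positive share is only received in a top object [A_a], so the
   held-objects-are-top property is preserved. *)
Lemma held_top' a o z : 0 < p' a o -> z \in Obar pref p' Oc' -> pref a o z.
Proof.
move=> p'o /(subsetP Obar_step_sub) zOb.
case: (ltrP 0 (p a o)) => po; first exact: held_top.
move: p'o; rewrite p'E; case: ifP => aI; last by rewrite ltNge po.
have : 0 <= (if o \in Oti a then lam a o * xO o else 0).
  by case: ifP => // oOti; apply: lamx_ge0 => //; apply: Otilde_i_Obar oOti.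
move: (if o \in Oti a then _ else _) => given given_ge0.
case: (boolP (o \in Ob)) => oOb; last by move=> ?; lra.
case: (ltrP 0 (gam a o)) => gam_o; first by move=> _; apply: Aset_top (gam_A aI oOb gam_o) zOb.
have -> : gam a o = 0 by apply/eqP; rewrite eq_le gam_o gam_ge0.
by rewrite mul0r addr0 => ?; lra.
Qed.

Lemma step_invariant : fttc_invariant pref om' p' Oc'.
Proof. by split; [apply: om'_ge0 | apply: p'_ge0 | apply: om'_out | apply: held_top']. Qed.

Definition spent k o := if (k \in Ia) && (o \in Oc) then lam k o * xO o else 0.

Lemma spent_ge0 k o : 0 <= spent k o.
Proof.
rewrite /spent; case: ifP => // /andP [kI oO].
by apply: lamx_ge0 => //; apply: (subsetP (Ocur_sub_Obar _ _ _)).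
Qed.

Lemma om'_spent k o : om' k o = om k o - spent k o.
Proof.
rewrite om'E /spent; case: (boolP (k \in Ia)) => kI /=; last by rewrite subr0.
by case: ifP => oO; rewrite ?subr0 // om_out ?oO.
Qed.

Lemma sum_spent k : k \in Ia -> \sum_o spent k o = \sum_(o in Oc) lam k o * xO o.
Proof. by move=> kI; rewrite [RHS]big_mkcond; apply: eq_bigr => o _; rewrite /spent kI. Qed.

Lemma sum_spent_inactive k : k \notin Ia -> \sum_o spent k o = 0.
Proof. by move=> kI; apply: big1 => o _; rewrite /spent (negbTE kI). Qed.

(* An agent trades away objects of [Oc] and of its own [Otilde_i] only. *)
Lemma sum_Obar_split k : k \in Ia ->
  \sum_(o in Ob) lam k o * xO o =
  \sum_(o in Oc) lam k o * xO o + \sum_(o in Oti k) lam k o * xO o.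
Proof.
move=> kI; rewrite (big_setID Oc) /=.
have -> : Ob :&: Oc = Oc by apply/setIidPr; apply: Ocur_sub_Obar.
congr (_ + _); rewrite (big_setID (Oti k)) /=.
have -> : (Ob :\: Oc) :&: Oti k = Oti k.
  apply/setIidPr; apply: subset_trans (Otilde_i_sub _ _ _ k) _.
  by apply/subsetP => o; rewrite /Otilde !inE andbC.
rewrite [X in _ + X]big1 ?addr0 // => o; rewrite !inE => /andP [notOti /andP [oOc oOb]].
have := lam_ge0 kI oOb; rewrite le_eqVlt => /orP [/eqP <-|lam_gt0]; first by rewrite mul0r.
have oOt : o \in Ot by rewrite /Otilde inE oOc.
by move: (lam_Oti kI oOt lam_gt0); rewrite (negbTE notOti).
Qed.

Lemma total_mass_step k : \sum_o p' k o = \sum_o p k o + \sum_o spent k o.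
Proof.
case: (boolP (k \in Ia)) => kI; last first.
  by rewrite sum_spent_inactive // addr0; apply: eq_bigr => o _; rewrite p'E (negbTE kI).
have -> : \sum_o p' k o = \sum_o p k o - \sum_(o in Oti k) lam k o * xO o
            + \sum_(o in Ob) gam k o * xI k.
  under eq_bigr => o _ do rewrite p'E kI.
  by rewrite big_split /= sumrB -!big_mkcond.
rewrite -mulr_suml gam_sum // mul1r xI_eq // sum_Obar_split // sum_spent //; lra.
Qed.

(* If some object of [Obar] is weakly preferred by [i] to [o0], everything [i]
   receives lies in its upper contour set of [o0], so that set gains at least
   what [i] spends. *)
Lemma upper_mass_step i o0 u : u \in Ob -> pref i u o0 ->
  \sum_(o | pref i o o0) p i o + \sum_o spent i o <= \sum_(o | pref i o o0) p' i o.
Proof.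
move=> uOb u_o0; case: (boolP (i \in Ia)) => iI; last first.
  by rewrite sum_spent_inactive // addr0 le_eqVlt eq_sym; apply/orP; left; apply/eqP;
     apply: eq_bigr => o _; rewrite p'E (negbTE iI).
have -> : \sum_o spent i o =
   \sum_o ((if o \in Ob then gam i o * xI i else 0) - (if o \in Oti i then lam i o * xO o else 0)).
  rewrite sum_spent // sumrB -!big_mkcond /= -mulr_suml gam_sum // mul1r xI_eq //.
  by rewrite sum_Obar_split //; lra.
rewrite [X in X + _]big_mkcond [X in _ <= X]big_mkcond -big_split /=.
apply: ler_sum => o _; rewrite p'E iI.
case: ifP => o_upper; first by rewrite addrA addrAC.
have given_ge0 : 0 <= (if o \in Oti i then lam i o * xO o else 0).
  by case: ifP => // oOti; apply: lamx_ge0 => //; apply: Otilde_i_Obar oOti.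
suff -> : (if o \in Ob then gam i o * xI i else 0) = 0 by rewrite add0r sub0r oppr_le0.
case: ifP => // oOb; case: (ltrP 0 (gam i o)) => gam_o; last first.
  by rewrite (_ : gam i o = 0) ?mul0r //; apply/eqP; rewrite eq_le gam_o gam_ge0.
by move: o_upper; rewrite (pref_trans (Aset_top (gam_A iI oOb gam_o) uOb) u_o0).
Qed.

Lemma upper_mass_frozen i o0 k : (forall u, u \in Ob -> ~~ pref i u o0) ->
  \sum_(o | pref i o o0) p' k o = \sum_(o | pref i o o0) p k o.
Proof.
move=> no_top; apply: eq_bigr => o o_upper; apply: p'_out.
by apply/negP => /no_top; rewrite o_upper.
Qed.

Hypothesis advantage : forall i j o, i \in Ia -> j \in Ia -> o \in Oc -> om j o <= om i o ->
  lam j o <= lam i o /\ om' j o <= om' i o.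

Lemma spent_diff_le i j o : spent j o - spent i o <= Num.max 0 (om j o - om i o).
Proof.
have [excess_ge excess_ge0] : om j o - om i o <= Num.max 0 (om j o - om i o)
    /\ 0 <= Num.max 0 (om j o - om i o) by rewrite !le_max !lexx orbT.
move: (Num.max _ _) excess_ge excess_ge0 => m excess_ge excess_ge0.
have si := spent_ge0 i o; have sj := spent_ge0 j o.
have sj_le : spent j o <= om j o by have := om'_ge0 j o; rewrite om'_spent; lra.
have spent0 k : ~~ ((k \in Ia) && (o \in Oc)) -> spent k o = 0.
  by rewrite /spent => /negbTE ->.
case: (boolP (o \in Oc)) => oO; last by rewrite (spent0 j) ?(negbTE oO) ?andbF //; lra.
case: (boolP (j \in Ia)) => jI; last by rewrite (spent0 j) ?(negbTE jI) //; lra.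
case: (boolP (i \in Ia)) => iI; last by rewrite (inactive_om0 o iI) in excess_ge; lra.
case: (lerP (om j o) (om i o)) => om_ji.
- have [lam_ji _] := advantage iI jI oO om_ji.
  suff : spent j o <= spent i o by lra.
  by rewrite /spent iI jI oO ler_wpM2r // xO_ge0 // (subsetP (Ocur_sub_Obar _ _ _)).
- have [_] := advantage jI iI oO (ltW om_ji); rewrite !om'_spent; lra.
Qed.

Lemma excess_step i j :
  \sum_o Num.max 0 (om' j o - om' i o)
    <= \sum_o Num.max 0 (om j o - om i o) + \sum_o spent i o - \sum_o spent j o.
Proof.
rewrite -big_split -sumrB /=; apply: ler_sum => o _.
have := spent_diff_le i j o; rewrite !om'_spent ge_max.
have := spent_ge0 i o; have := spent_ge0 j o.
have : 0 <= Num.max 0 (om j o - om i o) /\ om j o - om i o <= Num.max 0 (om j o - om i o).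
  by rewrite !le_max !lexx orbT.
case; move: (Num.max _ _) => m *; apply/andP; split; lra.
Qed.

End Step.

Section Run.
Variables (R : realFieldType) (I O : finType) (pref : I -> rel O) (om0 : I -> O -> R)
  (D : nat) (om p : nat -> I -> O -> R) (Os : nat -> {set O})
  (lam beta gam : nat -> I -> O -> R) (xI : nat -> I -> R) (xO : nat -> O -> R).
Hypothesis fee : fee_problem pref om0.
Hypothesis run : fttc_run pref om0 D om p Os lam beta gam xI xO.
Hypothesis advantage : bounded_advantage pref D om p Os lam.

Local Notation Ob d := (Obar pref (p d) (Os d)).

Lemma run_pref_trans a : transitive (pref a).
Proof. by case: fee => /(_ a) []. Qed.

Lemma run_step d : (d < D)%N ->
  fttc_step pref (om d) (p d) (Os d) (lam d.+1) (beta d.+1) (gam d.+1)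
            (xI d.+1) (xO d.+1) (om d.+1) (p d.+1) (Os d.+1).
Proof. by case: run => _ _ _ _ steps lt_dD; case: (steps d.+1). Qed.

Lemma run_invariant d : (d <= D)%N -> fttc_invariant pref (om d) (p d) (Os d).
Proof.
case: run => om_init p_init Os_init _ _.
elim: d => [|d IH] le_dD.
  split=> [k o|k o|k o|a o z]; rewrite ?om_init ?p_init ?Os_init ?inE ?ltxx //.
  by case: fee => _ /(_ k o) /andP [].
exact: step_invariant (run_step le_dD) run_pref_trans (IH (ltnW le_dD)).
Qed.

Lemma run_Obar_shrink d : (d < D)%N -> Ob d.+1 \subset Ob d.
Proof.
move=> lt_dD; apply: Obar_step_sub (run_step lt_dD) run_pref_trans _.
exact: run_invariant (ltnW lt_dD).
Qed.

Variables (i j : I) (o0 : O).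

Definition upper_mass d k := \sum_(o | pref i o o0) p d k o.

Definition envy d := upper_mass d j - upper_mass d i.

Definition excess d := \sum_o Num.max 0 (om d j o - om d i o).

Definition potential d := \sum_o p d j o - upper_mass d i + excess d.

Definition envy_bound := \sum_(o | om0 i o < om0 j o) (om0 j o - om0 i o).

Definition upper_open d := [exists u, (u \in Ob d) && pref i u o0].

Lemma potential0 : potential 0 = envy_bound.
Proof.
case: run => om_init p_init _ _ _.
rewrite /potential /upper_mass !big1 ?subrr ?add0r => [|o _|o _]; rewrite ?p_init //.
rewrite /excess /envy_bound [RHS]big_mkcond /=; apply: eq_bigr => o _; rewrite !om_init.
case: ltP => [lt_ij|le_ji]; first by rewrite max_r // subr_ge0 ltW.
by rewrite max_l // subr_le0.
Qed.

Lemma envy_le_potential d : (d <= D)%N -> envy d <= potential d.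
Proof.
move=> le_dD; case: (run_invariant le_dD) => _ p_ge0 _ _.
have excess_ge0 : 0 <= excess d by apply: sumr_ge0 => o _; rewrite le_max lexx.
have upper_le_total : upper_mass d j <= \sum_o p d j o.
  rewrite [X in _ <= X](bigID (fun o => pref i o o0)) /= lerDl.
  by apply: sumr_ge0 => o _; apply: p_ge0.
rewrite /envy /potential; lra.
Qed.

Lemma potential_step d : (d < D)%N -> upper_open d -> potential d.+1 <= potential d.
Proof.
move=> lt_dD /existsP [u /andP [uOb u_o0]].
have step := run_step lt_dD; have inv := run_invariant (ltnW lt_dD).
have adv_d : forall a b o, a \in Iact pref (om d) (p d) (Os d) ->
    b \in Iact pref (om d) (p d) (Os d) -> o \in Os d -> om d b o <= om d a o ->
    lam d.+1 b o <= lam d.+1 a o /\ om d.+1 b o <= om d.+1 a o.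
  by move=> a b o; apply: (advantage (d := d.+1)); rewrite ltn0Sn.
have := total_mass_step step j.
have := upper_mass_step step run_pref_trans uOb u_o0.
have := excess_step step inv adv_d i j.
rewrite /potential /upper_mass /excess; lra.
Qed.

Lemma envy_frozen d : (d < D)%N -> ~~ upper_open d -> envy d.+1 = envy d.
Proof.
move=> lt_dD closed.
have no_top u : u \in Ob d -> ~~ pref i u o0.
  by move=> uOb; apply: contra closed => u_o0; apply/existsP; exists u; rewrite uOb.
by rewrite /envy /upper_mass !(upper_mass_frozen (run_step lt_dD) _ no_top).
Qed.

Lemma upper_open_shrink d : (d < D)%N -> upper_open d.+1 -> upper_open d.
Proof.
move=> lt_dD /existsP [u /andP [uOb u_o0]]; apply/existsP; exists u.
by rewrite u_o0 andbT (subsetP (run_Obar_shrink lt_dD)).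
Qed.

(* While [i]'s upper contour set is open the potential stays below the bound;
   once it closes the envy is frozen. *)
Lemma envy_bounded_run d : (d <= D)%N ->
  envy d <= envy_bound /\ (upper_open d -> potential d <= envy_bound).
Proof.
elim: d => [|d IH] lt_dD.
  by rewrite -potential0; split=> //; apply: envy_le_potential.
have [IH_envy IH_pot] := IH (ltnW lt_dD).
have [open_d | closed_d] := boolP (upper_open d).
  have pot_le := le_trans (potential_step lt_dD open_d) (IH_pot open_d).
  by split=> // ; apply: le_trans (envy_le_potential lt_dD) pot_le.
split; first by rewrite (envy_frozen lt_dD closed_d).
by move/(upper_open_shrink lt_dD); rewrite (negbTE closed_d).
Qed.

End Run.

Unset Implicit Arguments.

Theorem proposition2 (R : realFieldType) (I O : finType)
  (pref : I -> rel O) (om0 : I -> O -> R) (D : nat)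
  (om p : nat -> I -> O -> R) (Os : nat -> {set O})
  (lam beta gam : nat -> I -> O -> R) (xI : nat -> I -> R) (xO : nat -> O -> R) :
  fee_problem pref om0 ->
  fttc_run pref om0 D om p Os lam beta gam xI xO ->
  bounded_advantage pref D om p Os lam ->
  bounded_envy pref om0 (p D).
Proof.
move=> fee run advantage i j o0.
by have [] := envy_bounded_run fee run advantage i j o0 (leqnn D).
Qed.
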